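(* Let \((Q, \preccurlyeq_{Q})\) be a totally ordered set having a smallest element and satisfying \(|Q| > 1\). Then the following conditions are equivalent. (i) The order topology of \((Q,\preccurlyeq_Q)\) is separable. (ii) For every \(\preccurlyeq_{Q}\)-pseudoultrametric \(d\) there is a \(\preccurlyeq_{\mathbb{R}_{0}}\)-pseudoultrametric \(\rho\) such that \(d\) and \(\rho\) are weakly similar. (iii) For every \(\preccurlyeq_{Q}\)-pseudoultrametric \(d\) there is a \(\preccurlyeq_{\mathbb{R}_{0}}\)-pseudoultrametric \(\rho\) such that \(d\) and \(\rho\) are combinatorially similar.
   Context: \(\mathbb{R}_0:=[0,\infty)\times\{0,1\}\) with the lexicographic linear order: \(\langle a,b\rangle\preccurlyeq_{\mathbb{R}_0}\langle c,e\rangle\) iff \(a<c\), or \(a=c\) and \(b\le e\); its smallest element is \(\langle 0,0\rangle\). The order topology on a totally ordered \((Q,\preccurlyeq_Q)\) is the topology with subbase consisting of all sets \(\{q: q\prec_Q a\}\) and \(\{q: a\prec_Q q\}\), \(a\in Q\); a space is separable if it has a countable subset meeting every nonempty open set. For a poset \((P,\preccurlyeq_P)\) with smallest element \(p_0\), \(d\colon X^2\to P\) (\(X\) nonempty) is a \(\preccurlyeq_P\)-pseudoultrametric if \(d\) is symmetric, \(d(x,x)=p_0\) for all \(x\), and for every triple \(\langle x_1,x_2,x_3\rangle\) in \(X\) there is a permutation \((i_1,i_2,i_3)\) of \((1,2,3)\) with \(d(x_{i_1},x_{i_3})\preccurlyeq_P d(x_{i_1},x_{i_2})=d(x_{i_2},x_{i_3})\).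 For a \(\preccurlyeq_Q\)-pseudoultrametric \(d\) on \(X\) and a \(\preccurlyeq_{\mathbb{R}_0}\)-pseudoultrametric \(\rho\) on \(Y\): they are combinatorially similar if there are bijections \(h\colon X\to Y\), \(f\colon d(X^2)\to\rho(Y^2)\) with \(\rho(h(x),h(y))=f(d(x,y))\) for all \(x,y\in X\); they are weakly similar if this holds with \(f\) an order isomorphism between the subposets \(d(X^2)\subseteq Q\) and \(\rho(Y^2)\subseteq\mathbb{R}_0\). *)

From Stdlib Require Import Reals List.
Open Scope R_scope.

Record total_order (Q : Type) (le : Q -> Q -> Prop) : Prop := {
  to_refl : forall a, le a a;
  to_antisym : forall a b, le a b -> le b a -> a = b;
  to_trans : forall a b c, le a b -> le b c -> le a c;
  to_total : forall a b, le a b \/ le b a }.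

Definition strict {Q : Type} (le : Q -> Q -> Prop) (a b : Q) : Prop :=
  le a b /\ a <> b.

Definition order_subbase {Q : Type} (le : Q -> Q -> Prop) (S : Q -> Prop) : Prop :=
  exists a, (forall q, S q <-> strict le q a) \/ (forall q, S q <-> strict le a q).

(* Open sets of the topology generated by the subbase: unions of finite
   intersections of subbase elements (the empty intersection is Q). *)
Definition order_open {Q : Type} (le : Q -> Q -> Prop) (U : Q -> Prop) : Prop :=
  forall x, U x -> exists l : list (Q -> Prop),
    Forall (order_subbase le) l /\ (forall S, In S l -> S x) /\
    (forall y, (forall S, In S l -> S y) -> U y).

Definition countable_set {Q : Type} (D : Q -> Prop) : Prop :=
  exists g : Q -> nat, forall x y, D x -> D y -> g x = g y -> x = y.

Definition order_separable {Q : Type} (le : Q -> Q -> Prop) : Prop :=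
  exists D : Q -> Prop, countable_set D /\
    forall U, order_open le U -> (exists x, U x) -> exists x, U x /\ D x.

Definition tri {X P : Type} (leP : P -> P -> Prop) (d : X -> X -> P) (a b c : X) : Prop :=
  leP (d a c) (d a b) /\ d a b = d b c.

Definition pseudoultrametric {X P : Type} (leP : P -> P -> Prop) (p0 : P)
  (d : X -> X -> P) : Prop :=
  inhabited X /\
  (forall x y, d x y = d y x) /\
  (forall x, d x x = p0) /\
  (forall x1 x2 x3,
     tri leP d x1 x2 x3 \/ tri leP d x1 x3 x2 \/ tri leP d x2 x1 x3 \/
     tri leP d x2 x3 x1 \/ tri leP d x3 x1 x2 \/ tri leP d x3 x2 x1).

(* R_0 = [0,oo) x {0,1} with the lexicographic order; {0,1} is bool, false = 0. *)
Definition R0lex : Type := { p : R * bool | 0 <= fst p }.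

Definition leR0lex (u v : R0lex) : Prop :=
  fst (proj1_sig u) < fst (proj1_sig v) \/
  (fst (proj1_sig u) = fst (proj1_sig v) /\
   Bool.le (snd (proj1_sig u)) (snd (proj1_sig v))).

Definition R0lex_bot : R0lex := exist _ (0, false) (Rle_refl 0).

Definition bijective_map {X Y : Type} (h : X -> Y) : Prop :=
  (forall x y, h x = h y -> x = y) /\ (forall y, exists x, h x = y).

Definition in_range {X P : Type} (d : X -> X -> P) (p : P) : Prop :=
  exists x y, d x y = p.

(* f restricted to d(X^2) is a bijection onto rho(Y^2), and
   rho(h x, h y) = f (d x y). *)
Definition comb_similar_via {X Y Q : Type} (d : X -> X -> Q) (rho : Y -> Y -> R0lex)
  (h : X -> Y) (f : Q -> R0lex) : Prop :=
  bijective_map h /\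
  (forall x y, rho (h x) (h y) = f (d x y)) /\
  (forall q, in_range d q -> in_range rho (f q)) /\
  (forall q1 q2, in_range d q1 -> in_range d q2 -> f q1 = f q2 -> q1 = q2) /\
  (forall r, in_range rho r -> exists q, in_range d q /\ f q = r).

Definition combinatorially_similar {X Y Q : Type} (d : X -> X -> Q)
  (rho : Y -> Y -> R0lex) : Prop :=
  exists (h : X -> Y) (f : Q -> R0lex), comb_similar_via d rho h f.

Definition weakly_similar {X Y Q : Type} (leQ : Q -> Q -> Prop) (d : X -> X -> Q)
  (rho : Y -> Y -> R0lex) : Prop :=
  exists (h : X -> Y) (f : Q -> R0lex), comb_similar_via d rho h f /\
    (forall q1 q2, in_range d q1 -> in_range d q2 ->
       (leQ q1 q2 <-> leR0lex (f q1) (f q2))).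

(* Separability of the order topology amounts to a monotone map phi : Q -> R whose
   fibres have at most two points.  Given a countable dense set with injective
   code g, take phi x = sum of 2^-(g d) over the dense points d < x; conversely the
   points with phi-value between two rationals, together with the least point above
   and the greatest point below each rational cut, form a countable dense set.  Such
   maps phi are the first coordinates of the strictly monotone maps Q -> R_0, the
   second coordinate separating the two points of a fibre.  A strictly monotone F
   with F q0 = <0,0> turns every pseudoultrametric d into the weakly similar F o d.
   Conversely, a combinatorial similarity of the ultrametric d a b = max a b (a <> b)
   on Q forces the distance map f to be strictly monotone: in the triangle q0, y, z
   with y < z the sides are y, z, z, so f y is the shorter side. *)

From Stdlib Require Import Reals List Lra Lia ZArith.
From Stdlib Require Import Classical ClassicalEpsilon ProofIrrelevance.
From Stdlib Require Cantor.
Open Scope R_scope.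

Section TotalOrder.
Context {Q : Type} {leQ : Q -> Q -> Prop} (Htot : total_order Q leQ).
Local Notation lt := (strict leQ).

Lemma lt_le_trans a b c : lt a b -> leQ b c -> lt a c.
Proof.
  intros [Hab Hne] Hbc; split; [exact (to_trans _ _ Htot a b c Hab Hbc)|].
  intros <-; apply Hne, (to_antisym _ _ Htot); assumption.
Qed.

Lemma le_lt_trans a b c : leQ a b -> lt b c -> lt a c.
Proof.
  intros Hab [Hbc Hne]; split; [exact (to_trans _ _ Htot a b c Hab Hbc)|].
  intros ->; apply Hne, (to_antisym _ _ Htot); assumption.
Qed.

Lemma lt_not_le a b : lt a b -> ~ leQ b a.
Proof. intros [Hab Hne] Hba; apply Hne, (to_antisym _ _ Htot); assumption. Qed.

Lemma not_le_lt a b : ~ leQ b a -> lt a b.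
Proof.
  intros Hba; split.
  - destruct (to_total _ _ Htot a b); [assumption | contradiction].
  - intros ->; apply Hba, (to_refl _ _ Htot).
Qed.

Lemma lt_trichotomy a b : a = b \/ lt a b \/ lt b a.
Proof.
  destruct (classic (a = b)) as [|Hne]; [now left|right].
  destruct (to_total _ _ Htot a b); [left|right]; split; auto.
Qed.

Lemma max_of_three x1 x2 x3 :
  (leQ x1 x2 /\ leQ x3 x2) \/ (leQ x1 x3 /\ leQ x2 x3) \/ (leQ x2 x1 /\ leQ x3 x1).
Proof.
  pose proof (to_trans _ _ Htot) as T.
  destruct (to_total _ _ Htot x1 x2), (to_total _ _ Htot x2 x3),
    (to_total _ _ Htot x1 x3); eauto 6.
Qed.

End TotalOrder.

Definition strict_mono {A B : Type} (leA : A -> A -> Prop) (leB : B -> B -> Prop)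
  (F : A -> B) : Prop :=
  forall x y, strict leA x y -> strict leB (F x) (F y).

Section StrictMono.
Context {A B : Type} {leA : A -> A -> Prop} {leB : B -> B -> Prop}
  (HA : total_order A leA) (HB : total_order B leB) (F : A -> B)
  (HF : strict_mono leA leB F).

Lemma strict_mono_le x y : leA x y -> leB (F x) (F y).
Proof.
  intros Hxy; destruct (classic (x = y)) as [<-|Hne].
  - apply (to_refl _ _ HB).
  - apply HF; split; assumption.
Qed.

Lemma strict_mono_reflect_le x y : leB (F x) (F y) -> leA x y.
Proof.
  intros H; apply NNPP; intros Hyx.
  exact (lt_not_le HB _ _ (HF _ _ (not_le_lt HA _ _ Hyx)) H).
Qed.

Lemma strict_mono_inj x y : F x = F y -> x = y.
Proof.
  intros E; apply (to_antisym _ _ HA); apply strict_mono_reflect_le;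
    rewrite E; apply (to_refl _ _ HB).
Qed.

End StrictMono.

Lemma epsilon_unique {A : Type} (i : inhabited A) (P : A -> Prop) x :
  P x -> (forall y, P y -> y = x) -> epsilon i P = x.
Proof. intros Hx Huniq; apply Huniq, epsilon_spec; exists x; exact Hx. Qed.

Lemma countable_range {A : Type} (e : nat -> A) :
  countable_set (fun x => exists n, e n = x).
Proof.
  exists (fun x => epsilon (inhabits O) (fun n => e n = x)).
  intros x y Hx Hy E.
  rewrite <- (epsilon_spec (inhabits O) _ Hx), <- (epsilon_spec (inhabits O) _ Hy), E.
  reflexivity.
Qed.

Definition R0fst (u : R0lex) : R := fst (proj1_sig u).
Definition R0snd (u : R0lex) : bool := snd (proj1_sig u).

Lemma R0lex_eq (u v : R0lex) : R0fst u = R0fst v -> R0snd u = R0snd v -> u = v.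
Proof.
  destruct u as [[a b] ha], v as [[c e] hc]; unfold R0fst, R0snd; simpl.
  intros -> ->; f_equal; apply proof_irrelevance.
Qed.

Lemma leR0lex_total_order : total_order R0lex leR0lex.
Proof.
  unfold leR0lex; split.
  - intros u; right; split; [reflexivity|]; destruct (snd (proj1_sig u)); easy.
  - intros u v [H|[H Hb]] [H'|[H' Hb']]; try lra.
    apply R0lex_eq; [exact H|]; unfold R0snd.
    destruct (snd (proj1_sig u)), (snd (proj1_sig v)); easy.
  - intros u v w [H|[H Hb]] [H'|[H' Hb']]; try (left; lra).
    right; split; [congruence|].
    destruct (snd (proj1_sig u)), (snd (proj1_sig v)), (snd (proj1_sig w)); easy.
  - intros u v; destruct (Rtotal_order (fst (proj1_sig u)) (fst (proj1_sig v)))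
      as [H|[H|H]]; [left; left; exact H| |right; left; exact H].
    destruct (snd (proj1_sig u)) eqn:Eu, (snd (proj1_sig v)) eqn:Ev;
      [left| right| left| left]; right; split; auto; easy.
Qed.

Lemma R0lex_bot_le u : leR0lex R0lex_bot u.
Proof.
  destruct u as [[a b] ha]; unfold leR0lex; simpl in *.
  destruct (Rle_lt_or_eq_dec 0 a ha); [left | right]; auto.
Qed.

Lemma R0fst_le u v : leR0lex u v -> R0fst u <= R0fst v.
Proof. unfold leR0lex, R0fst; intros [H|[H _]]; lra. Qed.

Lemma R0fst_lt u v : R0fst u < R0fst v -> strict leR0lex u v.
Proof. intros H; split; [left; exact H| intros ->; lra]. Qed.

Lemma R0lex_lt_same_fst u v : strict leR0lex u v -> R0fst u = R0fst v ->
  R0snd u = false /\ R0snd v = true.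
Proof.
  intros [[H|[_ Hb]] Hne] E; [unfold R0fst in E; lra|].
  unfold R0snd; destruct (snd (proj1_sig u)) eqn:Eu, (snd (proj1_sig v)) eqn:Ev;
    try easy; exfalso; apply Hne, R0lex_eq; unfold R0snd; congruence.
Qed.

Definition dyadic_term (P : nat -> Prop) (n : nat) : R :=
  if excluded_middle_informative (P n) then (/2) ^ n else 0.

Fixpoint dyadic_partial (P : nat -> Prop) (N : nat) : R :=
  match N with
  | O => 0
  | S n => dyadic_partial P n + dyadic_term P n
  end.

Lemma dyadic_term_bounds P n : 0 <= dyadic_term P n <= (/2) ^ n.
Proof.
  pose proof (pow_le (/2) n ltac:(lra)).
  unfold dyadic_term; destruct excluded_middle_informative; lra.
Qed.

Lemma dyadic_partial_le_2 P N : dyadic_partial P N <= 2.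
Proof.
  enough (dyadic_partial P N <= 2 - 2 * (/2) ^ N)
    by (pose proof (pow_le (/2) N ltac:(lra)); lra).
  induction N as [|n IH]; simpl; [lra|].
  pose proof (dyadic_term_bounds P n); lra.
Qed.

Lemma dyadic_partial_mono_N P n m :
  (n <= m)%nat -> dyadic_partial P n <= dyadic_partial P m.
Proof.
  induction 1 as [|m _ IH]; simpl; [lra|].
  pose proof (dyadic_term_bounds P m); lra.
Qed.

Lemma dyadic_term_mono (P P' : nat -> Prop) n :
  (forall n, P n -> P' n) -> dyadic_term P n <= dyadic_term P' n.
Proof.
  intros HPP'; pose proof (pow_le (/2) n ltac:(lra)).
  unfold dyadic_term; do 2 destruct excluded_middle_informative; try lra.
  exfalso; auto.
Qed.

Lemma dyadic_partial_mono (P P' : nat -> Prop) N :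
  (forall n, P n -> P' n) -> dyadic_partial P N <= dyadic_partial P' N.
Proof.
  intros HPP'; induction N as [|n IH]; simpl; [lra|].
  pose proof (dyadic_term_mono P P' n HPP'); lra.
Qed.

Lemma dyadic_partial_gap (P P' : nat -> Prop) m N :
  (forall n, P n -> P' n) -> P' m -> ~ P m -> (m < N)%nat ->
  dyadic_partial P N + (/2) ^ m <= dyadic_partial P' N.
Proof.
  intros HPP' Hm Hnm; induction N as [|n IH]; intros HN; [lia|]; simpl.
  destruct (Nat.eq_dec m n) as [<-|Hne].
  - pose proof (dyadic_partial_mono P P' m HPP').
    unfold dyadic_term; do 2 destruct excluded_middle_informative; tauto || lra.
  - pose proof (IH ltac:(lia)); pose proof (dyadic_term_mono P P' n HPP'); lra.
Qed.

Definition dyadic_partials (P : nat -> Prop) (r : R) : Prop :=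
  exists N, r = dyadic_partial P N.

Lemma dyadic_partials_bound P : bound (dyadic_partials P).
Proof. exists 2; intros r [N ->]; apply dyadic_partial_le_2. Qed.

Definition dyadic_sum (P : nat -> Prop) : R :=
  proj1_sig (completeness (dyadic_partials P) (dyadic_partials_bound P)
               (ex_intro _ 0 (ex_intro _ O eq_refl))).

Lemma dyadic_sum_lub P : is_lub (dyadic_partials P) (dyadic_sum P).
Proof. exact (proj2_sig _). Qed.

Lemma dyadic_partial_le_sum P N : dyadic_partial P N <= dyadic_sum P.
Proof. apply (dyadic_sum_lub P); exists N; reflexivity. Qed.

Lemma dyadic_sum_le P M : (forall N, dyadic_partial P N <= M) -> dyadic_sum P <= M.
Proof.
  intros H; apply (dyadic_sum_lub P); intros r [N ->]; apply H.
Qed.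

Lemma dyadic_sum_ge0 P : 0 <= dyadic_sum P.
Proof. exact (dyadic_partial_le_sum P O). Qed.

Lemma dyadic_sum_empty (P : nat -> Prop) : (forall n, ~ P n) -> dyadic_sum P = 0.
Proof.
  intros HP; apply Rle_antisym; [|apply dyadic_sum_ge0].
  apply dyadic_sum_le; intros N; induction N as [|n IH]; simpl; [lra|].
  unfold dyadic_term; destruct excluded_middle_informative as [H|];
    [exfalso; exact (HP n H)|lra].
Qed.

Lemma dyadic_sum_mono (P P' : nat -> Prop) :
  (forall n, P n -> P' n) -> dyadic_sum P <= dyadic_sum P'.
Proof.
  intros HPP'; apply dyadic_sum_le; intros N.
  apply (Rle_trans _ _ _ (dyadic_partial_mono P P' N HPP')), dyadic_partial_le_sum.
Qed.

Lemma dyadic_sum_gap (P P' : nat -> Prop) m :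
  (forall n, P n -> P' n) -> P' m -> ~ P m -> dyadic_sum P < dyadic_sum P'.
Proof.
  intros HPP' Hm Hnm; pose proof (pow_lt (/2) m ltac:(lra)).
  enough (dyadic_sum P <= dyadic_sum P' - (/2) ^ m) by lra.
  apply dyadic_sum_le; intros N; set (N' := Nat.max N (S m)).
  pose proof (dyadic_partial_mono_N P N N' ltac:(lia)).
  pose proof (dyadic_partial_gap P P' m N' HPP' Hm Hnm ltac:(lia)).
  pose proof (dyadic_partial_le_sum P' N'); lra.
Qed.

Definition rational_seq (k : nat) : R :=
  let (n, j) := Cantor.of_nat k in
  let (p, q) := Cantor.of_nat j in
  (INR p - INR q) / INR (S n).

Lemma rational_seq_dense a b : a < b -> exists k, a < rational_seq k < b.
Proof.
  intros Hab.
  destruct (archimed_cor1 (b - a)) as [[|n] [HN HN0]]; [lra|lia|].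
  set (M := INR (S n)) in *.
  assert (HM : 0 < M) by (apply lt_0_INR; lia).
  assert (HMb : 1 < (b - a) * M).
  { apply (Rmult_lt_compat_r M) in HN; [rewrite Rinv_l in HN; lra|exact HM]. }
  set (m := up (a * M)); destruct (archimed (a * M)) as [H1 H2]; fold m in H1, H2.
  exists (Cantor.to_nat (n, Cantor.to_nat (Z.to_nat m, Z.to_nat (- m)))).
  unfold rational_seq; rewrite !Cantor.cancel_of_to; fold M.
  replace (INR (Z.to_nat m) - INR (Z.to_nat (- m))) with (IZR m)
    by (rewrite !INR_IZR_INZ, <- minus_IZR; f_equal; lia).
  split; apply (Rmult_lt_reg_r M); auto; unfold Rdiv;
    rewrite Rmult_assoc, Rinv_l by lra; lra.
Qed.

Section OrderTopology.
Context {Q : Type} {leQ : Q -> Q -> Prop} (Htot : total_order Q leQ).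
Local Notation lt := (strict leQ).

Lemma order_open_interval a b : order_open leQ (fun q => lt a q /\ lt q b).
Proof.
  intros q Hq; exists ((fun q => lt a q) :: (fun q => lt q b) :: nil); split; [|split].
  - repeat constructor; [exists a; right| exists b; left]; tauto.
  - intros S [<-|[<-|[]]]; tauto.
  - intros y Hy; split; apply Hy; simpl; tauto.
Qed.

Definition above (lo : option Q) (y : Q) : Prop :=
  match lo with Some a => lt a y | None => True end.

Definition below (hi : option Q) (y : Q) : Prop :=
  match hi with Some b => lt y b | None => True end.

Lemma below_meet hi a c : below hi c -> lt c a ->
  exists hi', below hi' c /\ forall y, below hi' y -> below hi y /\ lt y a.
Proof.
  intros Hc Hca; destruct hi as [b|]; simpl in Hc.
  - destruct (classic (leQ b a)) as [Hba|Hab].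
    + exists (Some b); split; [exact Hc|]; intros y Hy; split; [exact Hy|].
      exact (lt_le_trans Htot _ _ _ Hy Hba).
    + exists (Some a); split; [exact Hca|]; intros y Hy; split; [|exact Hy].
      exact (lt_le_trans Htot _ _ _ Hy (proj1 (not_le_lt Htot _ _ Hab))).
  - exists (Some a); split; [exact Hca|]; intros y Hy; split; [exact I|exact Hy].
Qed.

Lemma above_meet lo a c : above lo c -> lt a c ->
  exists lo', above lo' c /\ forall y, above lo' y -> above lo y /\ lt a y.
Proof.
  intros Hc Hac; destruct lo as [b|]; simpl in Hc.
  - destruct (classic (leQ a b)) as [Hab|Hba].
    + exists (Some b); split; [exact Hc|]; intros y Hy; split; [exact Hy|].
      exact (le_lt_trans Htot _ _ _ Hab Hy).
    + exists (Some a); split; [exact Hac|]; intros y Hy; split; [|exact Hy].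
      exact (le_lt_trans Htot _ _ _ (proj1 (not_le_lt Htot _ _ Hba)) Hy).
  - exists (Some a); split; [exact Hac|]; intros y Hy; split; [exact I|exact Hy].
Qed.

Lemma subbase_meet_interval l c :
  Forall (order_subbase leQ) l -> (forall S, In S l -> S c) ->
  exists lo hi, above lo c /\ below hi c /\
    forall y, above lo y -> below hi y -> forall S, In S l -> S y.
Proof.
  induction l as [|S l IH]; intros Hl Hc.
  - exists None, None; simpl; tauto.
  - inversion Hl as [|? ? [a [HS|HS]] Hl']; subst.
    all: destruct IH as [lo [hi [Hlo [Hhi Hall]]]];
      [exact Hl'|intros; apply Hc; now right|].
    all: assert (HSc : S c) by (apply Hc; now left).
    + destruct (below_meet hi a c Hhi (proj1 (HS c) HSc)) as [hi' [Hhi' Hy]].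
      exists lo, hi'; split; [exact Hlo|split; [exact Hhi'|]].
      intros y Hylo Hyhi S' [<-|HS']; destruct (Hy y Hyhi); [apply HS | apply Hall]; auto.
    + destruct (above_meet lo a c Hlo (proj1 (HS c) HSc)) as [lo' [Hlo' Hy]].
      exists lo', hi; split; [exact Hlo'|split; [exact Hhi|]].
      intros y Hylo Hyhi S' [<-|HS']; destruct (Hy y Hylo); [apply HS | apply Hall]; auto.
Qed.

Context (q0 : Q) (Hq0 : forall q, leQ q0 q).

Lemma order_separable_of_dense (D : Q -> Prop) :
  countable_set D -> D q0 -> (forall c, (forall y, leQ y c) -> D c) ->
  (forall a c b, lt a c -> lt c b -> exists d, D d /\ lt a d /\ lt d b) ->
  order_separable leQ.
Proof.
  intros Hcount HDq0 HDmax HDbetween; exists D; split; [exact Hcount|].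
  intros U HU [c Hc]; destruct (HU c Hc) as [l [Hl [Hlc HlU]]].
  destruct (subbase_meet_interval l c Hl Hlc) as [lo [hi [Hlo [Hhi Hall]]]].
  enough (exists d, D d /\ above lo d /\ below hi d)
    as [d [Hd [Hdlo Hdhi]]] by (exists d; split; [apply HlU, Hall|]; assumption).
  destruct lo as [a|]; simpl in Hlo.
  - destruct hi as [b|]; simpl in Hhi.
    + exact (HDbetween a c b Hlo Hhi).
    + destruct (classic (forall y, leQ y c)) as [Hmax|Hnmax].
      * exists c; split; [apply HDmax|split]; auto.
      * apply not_all_ex_not in Hnmax as [b Hb].
        destruct (HDbetween a c b Hlo (not_le_lt Htot _ _ Hb)) as [d [Hd [Had _]]].
        exists d; simpl; auto.
  - exists q0; split; [exact HDq0|split; [exact I|]].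
    destruct hi as [b|]; [exact (le_lt_trans Htot _ _ _ (Hq0 c) Hhi)|exact I].
Qed.

End OrderTopology.

Definition two_to_one_monotone {Q : Type} (leQ : Q -> Q -> Prop) (phi : Q -> R) : Prop :=
  (forall x y, leQ x y -> phi x <= phi y) /\
  (forall x y z, strict leQ x y -> strict leQ y z -> phi x < phi z).

Section TwoToOne.
Context {Q : Type} {leQ : Q -> Q -> Prop} (Htot : total_order Q leQ).
Context (q0 : Q) (Hq0 : forall q, leQ q0 q).
Local Notation lt := (strict leQ).

Lemma mono_reflect_lt (phi : Q -> R) :
  (forall x y, leQ x y -> phi x <= phi y) -> forall x y, phi x < phi y -> lt x y.
Proof.
  intros Hmono x y Hxy; apply (not_le_lt Htot); intros Hyx.
  pose proof (Hmono y x Hyx); lra.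
Qed.

Lemma two_to_one_of_separable : order_separable leQ ->
  exists phi, two_to_one_monotone leQ phi /\ (forall x, 0 <= phi x) /\ phi q0 = 0.
Proof.
  intros [D [[g Hg] HD]].
  set (codes_below x n := exists d, D d /\ g d = n /\ lt d x).
  assert (Hsub : forall x y, leQ x y -> forall n, codes_below x n -> codes_below y n).
  { intros x y Hxy n [d [Hd [Hn Hdx]]]; exists d; split; [|split]; auto.
    exact (lt_le_trans Htot _ _ _ Hdx Hxy). }
  exists (fun x => dyadic_sum (codes_below x)); split; [split|split].
  - intros x y Hxy; exact (dyadic_sum_mono _ _ (Hsub x y Hxy)).
  - intros x y z Hxy Hyz.
    destruct (HD _ (order_open_interval x z) (ex_intro _ y (conj Hxy Hyz)))
      as [d [[Hxd Hdz] Hd]].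
    apply (dyadic_sum_gap _ _ (g d)).
    + exact (Hsub x z (proj1 (lt_le_trans Htot _ _ _ Hxy (proj1 Hyz)))).
    + exists d; auto.
    + intros [d' [Hd' [E Hd'x]]].
      rewrite (Hg d' d Hd' Hd E) in Hd'x; exact (lt_not_le Htot _ _ Hd'x (proj1 Hxd)).
  - intros x; apply dyadic_sum_ge0.
  - apply dyadic_sum_empty; intros n [d [_ [_ Hd]]]; exact (lt_not_le Htot _ _ Hd (Hq0 d)).
Qed.

Lemma lex_embedding_of_two_to_one (phi : Q -> R) :
  two_to_one_monotone leQ phi -> (forall x, 0 <= phi x) -> phi q0 = 0 ->
  exists F : Q -> R0lex, strict_mono leQ leR0lex F /\ F q0 = R0lex_bot.
Proof.
  intros [Hmono Hthree] Hnn Hphi0.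
  set (bit x := if excluded_middle_informative (exists x', lt x' x /\ phi x' = phi x)
                then true else false).
  exists (fun x => exist (fun p : R * bool => 0 <= fst p) (phi x, bit x) (Hnn x)); split.
  - intros x y Hxy.
    destruct (Rle_lt_or_eq_dec _ _ (Hmono x y (proj1 Hxy))) as [Hlt|Heq];
      [apply R0fst_lt; exact Hlt|].
    assert (Bx : bit x = false).
    { unfold bit; destruct excluded_middle_informative as [[x' [Hx' E]]|]; [|reflexivity].
      pose proof (Hthree x' x y Hx' Hxy); lra. }
    assert (By : bit y = true).
    { unfold bit; destruct excluded_middle_informative as [|Hn]; [reflexivity|].
      exfalso; apply Hn; exists x; auto. }
    split.
    + right; simpl; split; [exact Heq|rewrite Bx; easy].
    + intros E; apply (f_equal R0snd) in E; unfold R0snd in E; simpl in E; congruence.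
  - apply R0lex_eq; unfold R0fst, R0snd; simpl; [exact Hphi0|].
    unfold bit; destruct excluded_middle_informative as [[x' [Hx' _]]|]; [|reflexivity].
    exfalso; exact (lt_not_le Htot _ _ Hx' (Hq0 x')).
Qed.

Lemma two_to_one_of_lex_embedding (F : Q -> R0lex) :
  strict_mono leQ leR0lex F -> two_to_one_monotone leQ (fun x => R0fst (F x)).
Proof.
  intros HF; split.
  - intros x y Hxy; apply R0fst_le, (strict_mono_le leR0lex_total_order F HF _ _ Hxy).
  - intros x y z Hxy Hyz.
    pose proof (HF x y Hxy) as Fxy; pose proof (HF y z Hyz) as Fyz.
    pose proof (R0fst_le _ _ (proj1 Fxy)); pose proof (R0fst_le _ _ (proj1 Fyz)).
    destruct (Rle_lt_or_eq_dec (R0fst (F x)) (R0fst (F z))) as [|E]; [lra|exact r|].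
    destruct (R0lex_lt_same_fst _ _ Fxy) as [_ B1]; [lra|].
    destruct (R0lex_lt_same_fst _ _ Fyz) as [B2 _]; [lra|].
    congruence.
Qed.

Section CutPoints.
Context (phi : Q -> R) (Hphi : two_to_one_monotone leQ phi).
Local Notation r := rational_seq.

Definition between_point (k1 k2 : nat) : Q :=
  epsilon (inhabits q0) (fun x => r k1 < phi x < r k2).

Definition least_above (k : nat) : Q :=
  epsilon (inhabits q0) (fun x => r k < phi x /\ forall y, r k < phi y -> leQ x y).

Definition greatest_below (k : nat) : Q :=
  epsilon (inhabits q0) (fun x => phi x < r k /\ forall y, phi y < r k -> leQ y x).

Definition cut_point (n : nat) : Q :=
  let (i, j) := Cantor.of_nat n in
  let (k1, k2) := Cantor.of_nat j in
  match i with
  | O => q0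
  | 1%nat => least_above k1
  | 2%nat => greatest_below k1
  | _ => between_point k1 k2
  end.

Definition is_cut_point (x : Q) : Prop := exists n, cut_point n = x.

Lemma is_cut_point_code i k1 k2 :
  is_cut_point (cut_point (Cantor.to_nat (i, Cantor.to_nat (k1, k2)))).
Proof. eexists; reflexivity. Qed.

Lemma is_cut_point_q0 : is_cut_point q0.
Proof. exists (Cantor.to_nat (O, Cantor.to_nat (O, O))); reflexivity. Qed.

Lemma is_cut_point_least_above k c :
  r k < phi c -> (forall y, r k < phi y -> leQ c y) -> is_cut_point c.
Proof.
  intros Hc Hleast; pose proof (is_cut_point_code 1 k O) as H.
  unfold cut_point in H; rewrite !Cantor.cancel_of_to in H.
  unfold least_above in H; rewrite (epsilon_unique _ _ c) in H; [exact H|auto|].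
  intros y [Hy Hyleast]; apply (to_antisym _ _ Htot); auto.
Qed.

Lemma is_cut_point_greatest_below k c :
  phi c < r k -> (forall y, phi y < r k -> leQ y c) -> is_cut_point c.
Proof.
  intros Hc Hgreatest; pose proof (is_cut_point_code 2 k O) as H.
  unfold cut_point in H; rewrite !Cantor.cancel_of_to in H.
  unfold greatest_below in H; rewrite (epsilon_unique _ _ c) in H; [exact H|auto|].
  intros y [Hy Hygreatest]; apply (to_antisym _ _ Htot); auto.
Qed.

Lemma is_cut_point_between k1 k2 e :
  r k1 < phi e < r k2 -> exists d, is_cut_point d /\ r k1 < phi d < r k2.
Proof.
  intros He; pose proof (is_cut_point_code 3 k1 k2) as H.
  unfold cut_point in H; rewrite !Cantor.cancel_of_to in H.
  exists (between_point k1 k2); split; [exact H|].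
  unfold between_point; apply epsilon_spec; exists e; exact He.
Qed.

Lemma is_cut_point_max c : (forall y, leQ y c) -> is_cut_point c.
Proof.
  intros Hmax; destruct (rational_seq_dense (phi c) (phi c + 1)) as [k Hk]; [lra|].
  apply (is_cut_point_greatest_below k); [lra|auto].
Qed.

(* If no value of [phi] lies strictly between [phi a] and [phi b], then [c] is the
   least point above, or the greatest point below, a rational cut. *)
Lemma cut_point_dense a c b :
  lt a c -> lt c b -> exists d, is_cut_point d /\ lt a d /\ lt d b.
Proof.
  intros Hac Hcb; destruct Hphi as [Hmono Hthree].
  pose proof (Hthree a c b Hac Hcb) as Hab.
  pose proof (mono_reflect_lt phi Hmono) as Hreflect.
  destruct (classic (exists e, phi a < phi e < phi b)) as [[e He]|Hgap].
  - destruct (rational_seq_dense (phi a) (phi e)) as [k1 Hk1]; [lra|].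
    destruct (rational_seq_dense (phi e) (phi b)) as [k2 Hk2]; [lra|].
    destruct (is_cut_point_between k1 k2 e) as [d [Hd Hphid]]; [lra|].
    exists d; split; [exact Hd|split; apply Hreflect; lra].
  - assert (Hgap' : forall y, phi a < phi y -> phi y < phi b -> False)
      by (intros y H1 H2; apply Hgap; exists y; auto).
    pose proof (Hmono a c (proj1 Hac)); pose proof (Hmono c b (proj1 Hcb)).
    exists c; split; [|auto].
    destruct (Rle_lt_or_eq_dec (phi a) (phi c)) as [Hlt|Heq]; [assumption| |].
    + destruct (rational_seq_dense (phi a) (phi c)) as [k Hk]; [lra|].
      apply (is_cut_point_least_above k); [lra|]; intros y Hy.
      apply NNPP; intros Hcy; apply (not_le_lt Htot) in Hcy.
      pose proof (Hthree y c b Hcy Hcb); apply (Hgap' y); lra.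
    + destruct (rational_seq_dense (phi c) (phi b)) as [k Hk]; [lra|].
      apply (is_cut_point_greatest_below k); [lra|]; intros y Hy.
      apply NNPP; intros Hyc; apply (not_le_lt Htot) in Hyc.
      pose proof (Hthree a c y Hac Hyc); apply (Hgap' y); lra.
Qed.

End CutPoints.

Lemma order_separable_of_two_to_one (phi : Q -> R) :
  two_to_one_monotone leQ phi -> order_separable leQ.
Proof.
  intros Hphi; apply (order_separable_of_dense Htot q0 Hq0 (is_cut_point phi)).
  - apply countable_range.
  - apply is_cut_point_q0.
  - apply is_cut_point_max.
  - apply cut_point_dense, Hphi.
Qed.

End TwoToOne.

Section Ultrametrics.
Context {X P : Type} (leP : P -> P -> Prop) (p0 : P).

Lemma pseudoultrametric_base_le (d : X -> X -> P) a b c :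
  pseudoultrametric leP p0 d -> d a c = d b c -> d a b <> d a c -> leP (d a b) (d a c).
Proof.
  intros [_ [Hs [_ Htri]]] Hac Hne; unfold tri in Htri.
  destruct (Htri a b c) as [[H1 H2]|[[H1 H2]|[[H1 H2]|[[H1 H2]|[[H1 H2]|[H1 H2]]]]]];
    rewrite ?(Hs b a), ?(Hs c a), ?(Hs c b) in *; congruence || assumption.
Qed.

Lemma pseudoultrametric_comp {P' : Type} (leP' : P' -> P' -> Prop) (p0' : P')
  (F : P -> P') (d : X -> X -> P) :
  (forall p q, leP p q -> leP' (F p) (F q)) -> F p0 = p0' ->
  pseudoultrametric leP p0 d -> pseudoultrametric leP' p0' (fun x y => F (d x y)).
Proof.
  intros HF HF0 [Hinh [Hs [Hdiag Htri]]]; split; [exact Hinh|split; [|split]].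
  - intros x y; rewrite Hs; reflexivity.
  - intros x; rewrite Hdiag; exact HF0.
  - assert (Htri' : forall a b c, tri leP d a b c -> tri leP' (fun x y => F (d x y)) a b c)
      by (intros a b c [H1 H2]; split; [apply HF, H1|rewrite H2; reflexivity]).
    intros x1 x2 x3; destruct (Htri x1 x2 x3) as [H|[H|[H|[H|[H|H]]]]];
      apply Htri' in H; tauto.
Qed.

End Ultrametrics.

Definition dmax {Q : Type} (leQ : Q -> Q -> Prop) (q0 : Q) (a b : Q) : Q :=
  if excluded_middle_informative (a = b) then q0
  else if excluded_middle_informative (leQ a b) then b else a.

Section MaxUltrametric.
Context {Q : Type} {leQ : Q -> Q -> Prop} (Htot : total_order Q leQ).
Context (q0 : Q) (Hq0 : forall q, leQ q0 q).
Local Notation lt := (strict leQ).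

Local Notation dmax := (dmax leQ q0).

Lemma dmax_lt a b : lt a b -> dmax a b = b /\ dmax b a = b.
Proof.
  intros [Hab Hne]; unfold dmax; split.
  - destruct (excluded_middle_informative (a = b)); [contradiction|].
    destruct (excluded_middle_informative (leQ a b)); tauto.
  - destruct (excluded_middle_informative (b = a)); [congruence|].
    destruct (excluded_middle_informative (leQ b a)) as [Hba|]; [|reflexivity].
    exfalso; apply Hne, (to_antisym _ _ Htot); assumption.
Qed.

Lemma dmax_diag a : dmax a a = q0.
Proof. unfold dmax; destruct (excluded_middle_informative (a = a)); congruence. Qed.

Lemma dmax_sym a b : dmax a b = dmax b a.
Proof.
  destruct (lt_trichotomy Htot a b) as [->|[H|H]]; [reflexivity| |];
    destruct (dmax_lt _ _ H); congruence.
Qed.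

Lemma dmax_apex a m b : a <> m -> b <> m -> leQ a m -> leQ b m -> tri leQ dmax a m b.
Proof.
  intros Ham Hbm Ha Hb.
  destruct (dmax_lt a m) as [E1 _]; [split; assumption|].
  destruct (dmax_lt b m) as [_ E2]; [split; assumption|].
  unfold tri; rewrite E1, E2; split; [|reflexivity].
  unfold dmax; destruct (excluded_middle_informative (a = b)); [apply Hq0|].
  destruct (excluded_middle_informative (leQ a b)); assumption.
Qed.

Lemma dmax_pseudoultrametric : pseudoultrametric leQ q0 dmax.
Proof.
  split; [exact (inhabits q0)|split; [exact dmax_sym|split; [exact dmax_diag|]]].
  assert (Hdeg : forall a c, tri leQ dmax a c a)
    by (intros a c; split; [rewrite dmax_diag; apply Hq0|apply dmax_sym]).
  intros x1 x2 x3.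
  destruct (classic (x1 = x3)) as [<-|N13]; [left; apply Hdeg|].
  destruct (classic (x1 = x2)) as [<-|N12]; [right; left; apply Hdeg|].
  destruct (classic (x2 = x3)) as [<-|N23]; [right; right; left; apply Hdeg|].
  destruct (max_of_three Htot x1 x2 x3) as [[H1 H3]|[[H1 H2]|[H2 H3]]].
  - left; apply dmax_apex; congruence || assumption.
  - right; left; apply dmax_apex; congruence || assumption.
  - right; right; left; apply dmax_apex; congruence || assumption.
Qed.

End MaxUltrametric.

Definition weakly_R0_representable {Q : Type} (leQ : Q -> Q -> Prop) (q0 : Q) : Prop :=
  forall (X : Type) (d : X -> X -> Q), pseudoultrametric leQ q0 d ->
    exists (Y : Type) (rho : Y -> Y -> R0lex),
      pseudoultrametric leR0lex R0lex_bot rho /\ weakly_similar leQ d rho.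

Definition combinatorially_R0_representable {Q : Type} (leQ : Q -> Q -> Prop) (q0 : Q) :
  Prop :=
  forall (X : Type) (d : X -> X -> Q), pseudoultrametric leQ q0 d ->
    exists (Y : Type) (rho : Y -> Y -> R0lex),
      pseudoultrametric leR0lex R0lex_bot rho /\ combinatorially_similar d rho.

Lemma combinatorially_of_weakly_R0_representable {Q : Type} (leQ : Q -> Q -> Prop)
  (q0 : Q) :
  weakly_R0_representable leQ q0 -> combinatorially_R0_representable leQ q0.
Proof.
  intros H X d Hd; destruct (H X d Hd) as [Y [rho [Hrho [h [f [Hsim _]]]]]].
  exists Y, rho; split; [exact Hrho|exists h, f; exact Hsim].
Qed.

Section Similarity.
Context {Q : Type} {leQ : Q -> Q -> Prop} (Htot : total_order Q leQ).
Context (q0 : Q) (Hq0 : forall q, leQ q0 q).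

Lemma weakly_similar_comp {X : Type} (F : Q -> R0lex) (d : X -> X -> Q) :
  strict_mono leQ leR0lex F -> weakly_similar leQ d (fun x y => F (d x y)).
Proof.
  intros HF; exists (fun x => x), F; split; [split; [|split; [|split; [|split]]]|].
  - split; [auto|intros y; exists y; reflexivity].
  - reflexivity.
  - intros q [x [y <-]]; exists x, y; reflexivity.
  - intros q1 q2 _ _; apply (strict_mono_inj Htot leR0lex_total_order F HF).
  - intros r [x [y <-]]; exists (d x y); split; [exists x, y|]; reflexivity.
  - intros q1 q2 _ _; split.
    + apply (strict_mono_le leR0lex_total_order F HF).
    + apply (strict_mono_reflect_le Htot leR0lex_total_order F HF).
Qed.

Lemma strict_mono_of_comb_similar_dmax {Y : Type} (rho : Y -> Y -> R0lex) h f :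
  pseudoultrametric leR0lex R0lex_bot rho -> comb_similar_via (dmax leQ q0) rho h f ->
  strict_mono leQ leR0lex f.
Proof.
  intros Hrho [_ [Hrel [_ [Hinj _]]]].
  assert (Hrange : forall q, in_range (dmax leQ q0) q).
  { intros q; destruct (classic (q = q0)) as [->|Hne].
    - exists q0, q0; apply dmax_diag.
    - exists q0, q; apply (dmax_lt Htot q0); split; auto. }
  assert (Hf0 : f q0 = R0lex_bot).
  { destruct Hrho as [_ [_ [Hdiag _]]].
    rewrite <- (Hdiag (h q0)), Hrel, dmax_diag; reflexivity. }
  intros y z Hyz.
  assert (Hne : f y <> f z)
    by (intros E; apply (proj2 Hyz), Hinj; auto).
  split; [|exact Hne].
  destruct (classic (y = q0)) as [->|Hy0]; [rewrite Hf0; apply R0lex_bot_le|].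
  assert (H0y : strict leQ q0 y) by (split; auto).
  pose proof (le_lt_trans Htot _ _ _ (proj1 H0y) Hyz) as H0z.
  pose proof (pseudoultrametric_base_le _ _ _ (h q0) (h y) (h z) Hrho) as Hbase.
  rewrite !Hrel, (proj1 (dmax_lt Htot q0 _ _ H0y)), (proj1 (dmax_lt Htot q0 _ _ H0z)),
    (proj1 (dmax_lt Htot q0 _ _ Hyz)) in Hbase.
  exact (Hbase eq_refl Hne).
Qed.

Lemma weakly_R0_representable_of_separable :
  order_separable leQ -> weakly_R0_representable leQ q0.
Proof.
  intros Hsep X d Hd.
  destruct (two_to_one_of_separable Htot q0 Hq0 Hsep) as [phi [Hphi [Hnn Hphi0]]].
  destruct (lex_embedding_of_two_to_one Htot q0 Hq0 phi Hphi Hnn Hphi0) as [F [HF HF0]].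
  exists X, (fun x y => F (d x y)); split.
  - exact (pseudoultrametric_comp _ _ _ _ F d
             (strict_mono_le leR0lex_total_order F HF) HF0 Hd).
  - exact (weakly_similar_comp F d HF).
Qed.

Lemma separable_of_combinatorially_R0_representable :
  combinatorially_R0_representable leQ q0 -> order_separable leQ.
Proof.
  intros H.
  destruct (H Q _ (dmax_pseudoultrametric Htot q0 Hq0)) as [Y [rho [Hrho [h [f Hsim]]]]].
  apply (order_separable_of_two_to_one Htot q0 Hq0 (fun q => R0fst (f q))).
  exact (two_to_one_of_lex_embedding f
           (strict_mono_of_comb_similar_dmax rho h f Hrho Hsim)).
Qed.

End Similarity.

Theorem theorem4p20 (Q : Type) (leQ : Q -> Q -> Prop) (q0 : Q)
  (Htot : total_order Q leQ) (Hq0 : forall q, leQ q0 q)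
  (Hcard : exists a b : Q, a <> b) :
  (order_separable leQ <->
   (forall (X : Type) (d : X -> X -> Q), pseudoultrametric leQ q0 d ->
      exists (Y : Type) (rho : Y -> Y -> R0lex),
        pseudoultrametric leR0lex R0lex_bot rho /\ weakly_similar leQ d rho)) /\
  (order_separable leQ <->
   (forall (X : Type) (d : X -> X -> Q), pseudoultrametric leQ q0 d ->
      exists (Y : Type) (rho : Y -> Y -> R0lex),
        pseudoultrametric leR0lex R0lex_bot rho /\ combinatorially_similar d rho)).
Proof.
  pose proof (weakly_R0_representable_of_separable Htot q0 Hq0) as i_ii.
  pose proof (combinatorially_of_weakly_R0_representable leQ q0) as ii_iii.
  pose proof (separable_of_combinatorially_R0_representable Htot q0 Hq0) as iii_i.
  split; split; intros H.
  - exact (i_ii H).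
  - exact (iii_i (ii_iii H)).
  - exact (ii_iii (i_ii H)).
  - exact (iii_i H).
Qed.
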